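(* Let $R$ be a $*$-ring. Then $R$ is strongly $*$-clean and $\pi$-regular if and only if $R$ is strongly $\pi$-$*$-regular.
   Context: A $*$-ring is a ring with identity with an involution $*$. A projection is $p$ with $p^2=p=p^*$. $R$ is strongly $*$-clean if each element is a sum of a projection and a unit commuting with each other. $R$ is $\pi$-regular if for each $a$ there exist $n\ge1$ and $b$ with $a^n=a^nba^n$. $R$ is strongly $\pi$-$*$-regular if for every $a$ there exist a projection $e$, a unit $u$ and $m\ge1$ with $a^m=eu$ and $a,e,u$ pairwise commuting. *)

From mathcomp Require Import all_boot all_algebra.
Set Implicit Arguments. Unset Strict Implicit. Unset Printing Implicit Defensive.
Import GRing.Theory.
Local Open Scope ring_scope.

Definition is_star_involution (R : pzRingType) (s : R -> R) : Prop :=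
  (forall x y : R, s (x + y) = s x + s y) /\
  (forall x y : R, s (x * y) = s y * s x) /\
  (forall x : R, s (s x) = x).

Definition is_projection (R : pzRingType) (s : R -> R) (p : R) : Prop :=
  p * p = p /\ s p = p.

Definition is_unit (R : pzRingType) (u : R) : Prop :=
  exists v : R, u * v = 1 /\ v * u = 1.

Definition strongly_star_clean (R : pzRingType) (s : R -> R) : Prop :=
  forall a : R, exists e u : R,
    [/\ is_projection s e, is_unit u, a = e + u & e * u = u * e].

Definition pi_regular (R : pzRingType) : Prop :=
  forall a : R, exists (n : nat) (b : R),
    (1 <= n)%N /\ a ^+ n = a ^+ n * b * a ^+ n.

Definition strongly_pi_star_regular (R : pzRingType) (s : R -> R) : Prop :=
  forall a : R, exists (e u : R) (m : nat),
    [/\ is_projection s e, is_unit u, (1 <= m)%N, a ^+ m = e * u &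
        [/\ a * e = e * a, a * u = u * a & e * u = u * e]].

From mathcomp Require Import all_boot all_algebra.
Set Implicit Arguments. Unset Strict Implicit. Unset Printing Implicit Defensive.
Import GRing.Theory.
Local Open Scope ring_scope.

(* In a strongly *-clean ring every idempotent f is a projection (writing
   f = p + u forces f = 1 - p), and idempotents that are all self-adjoint are
   central.  So if a^n = a^n b a^n, the idempotent f = a^n b is a central
   projection and a^n = f (a^n + 1 - f), where a^n + 1 - f is a unit because
   a^n is invertible in the corner fRf.  Conversely, if a^m = e u then
   a - (1 - e) = e a + (1 - e)(n - 1) with n = (1 - e) a nilpotent; both
   summands are units of the complementary corners eRe and (1 - e)R(1 - e),
   hence a - (1 - e) is a unit, and a^m = a^m u^-1 a^m. *)

Section RingFacts.

Variable R : pzRingType.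
Implicit Types e u v x y : R.

Lemma idem_mul_subr e : e * e = e -> e * (1 - e) = 0.
Proof. by move=> ee; rewrite mulrBr mulr1 ee subrr. Qed.

Lemma subr_mul_idem e : e * e = e -> (1 - e) * e = 0.
Proof. by move=> ee; rewrite mulrBl mul1r ee subrr. Qed.

Lemma idem_subr e : e * e = e -> (1 - e) * (1 - e) = 1 - e.
Proof. by move=> ee; rewrite mulrBr mulr1 subr_mul_idem ?subr0. Qed.

Lemma idem_expS e k : e * e = e -> e ^+ k.+1 = e.
Proof. by move=> ee; elim: k => [|k IHk]; rewrite ?expr1 // exprS IHk ee. Qed.

Lemma comm_inv u v x :
  u * v = 1 -> v * u = 1 -> GRing.comm x u -> GRing.comm x v.
Proof.
move=> uv vu xu; rewrite /GRing.comm -[x * v]mul1r -vu.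
by rewrite -mulrA (mulrA u x) -xu -!mulrA uv mulr1.
Qed.

Lemma unit_mulI u x y : is_unit u -> u * x = u * y -> x = y.
Proof.
by move=> [v [_ vu]] uxy; rewrite -[x]mul1r -[y]mul1r -vu -!mulrA uxy.
Qed.

Lemma nilpotent_unit_subr x k : x ^+ k = 0 -> is_unit (1 - x).
Proof.
move=> xk0; exists (\sum_(i < k) x ^+ i).
have inv : (1 - x) * \sum_(i < k) x ^+ i = 1.
  by rewrite -opprB mulNr -subrX1 xk0 sub0r opprK.
split=> //; rewrite -[RHS]inv; symmetry; apply: commr_sum => i _.
by apply/commrX/commr_sym/commrB; [apply: commr1 | apply: commr_refl].
Qed.

Lemma regular_idem x b : x = x * b * x -> (x * b) * (x * b) = x * b.
Proof. by move=> xbx; rewrite mulrA -xbx. Qed.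

Lemma regular_factor x b : x = x * b * x -> x = x * b * (x + (1 - x * b)).
Proof.
by move=> xbx; rewrite mulrDr -xbx idem_mul_subr ?addr0 ?regular_idem.
Qed.

Definition corner e x := e * x = x /\ x * e = x.

Lemma corner_mul e x : e * e = e -> GRing.comm e x -> corner e (e * x).
Proof. by move=> ee ex; split; rewrite ?mulrA ?ee // -mulrA -ex mulrA ee. Qed.

Lemma corner_orth e x y : e * e = e ->
  corner e x -> corner (1 - e) y -> x * y = 0 /\ y * x = 0.
Proof.
move=> ee [ex xe] [ey ye]; split.
  by rewrite -xe -ey mulrA -(mulrA x) idem_mul_subr // mulr0 mul0r.
by rewrite -ye -ex mulrA -(mulrA y) subr_mul_idem // mulr0 mul0r.
Qed.

Lemma corner_unit_mul e x y : e * e = e -> GRing.comm e x -> GRing.comm e y ->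
  x * y * e = e -> (e * x) * (e * y) = e.
Proof.
move=> ee ex ey xye.
have exy : GRing.comm e (x * y) by apply: commrM.
by rewrite mulrA -(mulrA e x e) -ex mulrA ee -mulrA exy.
Qed.

Lemma unit_add_corner e p p' q q' : e * e = e ->
  corner e p -> corner e p' -> corner (1 - e) q -> corner (1 - e) q' ->
  p * p' = e -> p' * p = e -> q * q' = 1 - e -> q' * q = 1 - e ->
  is_unit (p + q).
Proof.
move=> ee cp cp' cq cq' pp' p'p qq' q'q; exists (p' + q').
have [pq' q'p] := corner_orth ee cp cq'.
have [p'q qp'] := corner_orth ee cp' cq.
by rewrite !mulrDl !mulrDr pp' p'p qq' q'q pq' q'p p'q qp' addr0 add0r subrKC.
Qed.

End RingFacts.

Section StarRing.

Variables (R : pzRingType) (s : R -> R).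
Hypothesis star_s : is_star_involution s.
Implicit Types e f p x y : R.

Lemma star1 : s 1 = 1.
Proof.
by have [_ [sM sK]] := star_s; have := sM (s 1) 1; rewrite mulr1 !sK mulr1.
Qed.

Lemma starB x y : s (x - y) = s x - s y.
Proof. by have := (star_s.1) (x - y) y; rewrite subrK => ->; rewrite addrK. Qed.

Lemma projection_subr p : is_projection s p -> is_projection s (1 - p).
Proof. by move=> [pp sp]; split; rewrite ?idem_subr // starB star1 sp. Qed.

Section SelfAdjointIdempotents.

Hypothesis idem_sym : forall f : R, f * f = f -> s f = f.

Lemma idem_sym_mul_subr e x : e * e = e -> e * x * (1 - e) = 0.
Proof.
move=> ee; set X := e * x * (1 - e).
have eX : e * X = X by rewrite /X !mulrA ee.
have Xe : X * e = 0 by rewrite /X -mulrA subr_mul_idem // mulr0.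
have XX : X * X = 0 by rewrite -{2}eX mulrA Xe mul0r.
have eXid : (e + X) * (e + X) = e + X.
  by rewrite mulrDl !mulrDr ee eX Xe XX add0r addr0.
(* self-adjointness of e + X gives X = (1 - e) (s x) e, which e annihilates *)
have := idem_sym eXid; have [sD [sM _]] := star_s.
rewrite sD idem_sym // /X !sM starB star1 idem_sym // -/X => /addrI XE.
by rewrite -eX -XE mulrA idem_mul_subr // mul0r.
Qed.

Lemma idem_sym_central e : e * e = e -> forall x, GRing.comm e x.
Proof.
move=> ee x; rewrite /GRing.comm; have exe := idem_sym_mul_subr x ee.
have := idem_sym_mul_subr x (idem_subr ee); rewrite subKr => xe.
have -> : e * x = e * x * e.
  by apply/eqP; rewrite -subr_eq0 -[X in X - _]mulr1 -mulrBr exe.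
by apply/esym/eqP; rewrite -subr_eq0 -[X in X - _]mul1r -mulrA -mulrBl mulrA xe.
Qed.

End SelfAdjointIdempotents.

Section StronglyStarClean.

Hypothesis clean_s : strongly_star_clean s.

Lemma sclean_idem_sym f : f * f = f -> s f = f.
Proof.
move=> ff; have [p [u [prp unit_u fE pu]]] := clean_s f; have [pp _] := prp.
have uE : u = f - p by rewrite fE addrAC subrr add0r.
have pf : p * f = f * p by rewrite fE mulrDr mulrDl pp pu.
have fp0 : f * p = 0.
  apply: (unit_mulI unit_u).
  by rewrite uE mulrBl !mulrA ff pf -mulrA pp subrr mulr0.
have fp1 : f + p = 1.
  apply: (unit_mulI unit_u); rewrite uE mulrBl !mulrDr ff fp0 pf fp0 pp mulr1.
  by rewrite addr0 add0r.
by have := (projection_subr prp).2; rewrite -fp1 addrK.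
Qed.

Lemma sclean_idem_central e : e * e = e -> forall x, GRing.comm e x.
Proof. exact: (idem_sym_central (@sclean_idem_sym)). Qed.

End StronglyStarClean.

End StarRing.

Section CentralIdempotents.

Variable R : pzRingType.
Hypothesis idem_central : forall e : R, e * e = e -> forall x, GRing.comm e x.

(* x is invertible in the corner fRf, f = x b, with inverse f b *)
Lemma regular_unit (x b : R) : x = x * b * x -> is_unit (x + (1 - x * b)).
Proof.
move=> xbx; have ff := regular_idem xbx.
have ee : (b * x) * (b * x) = b * x by rewrite -mulrA (mulrA x) -xbx.
have fx : x * b * x = x by rewrite -xbx.
have fE : x * b = b * x * (x * b).
  by rewrite {1}xbx -(mulrA x b x) -(idem_central ee x) !mulrA.
have eE : b * x = x * b * (b * x).
  by rewrite {1}xbx (mulrA b) -(idem_central ff b) !mulrA.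
have ef : b * x = x * b by rewrite eE -(idem_central ee (x * b)) -fE.
apply: (unit_add_corner (p' := x * b * b) (q' := 1 - x * b) ff).
- by have := corner_mul ff (idem_central ff x); rewrite fx.
- exact: corner_mul ff (idem_central ff b).
- by split; rewrite idem_subr.
- by split; rewrite idem_subr.
- by rewrite mulrA -(idem_central ff x) fx.
- by rewrite -mulrA ef ff.
- exact: idem_subr.
- exact: idem_subr.
Qed.

End CentralIdempotents.

Lemma strongly_pi_star_regular_of_clean (R : pzRingType) (s : R -> R) :
  is_star_involution s -> strongly_star_clean s -> pi_regular R ->
  strongly_pi_star_regular s.
Proof.
move=> star_s clean_s pireg a.
have idemC := sclean_idem_central star_s clean_s.
have [n [b [n_gt0 xbx]]] := pireg a; have ff := regular_idem xbx.
exists (a ^+ n * b), (a ^+ n + (1 - a ^+ n * b)), n; split=> //.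
- by split=> //; apply: sclean_idem_sym.
- exact: regular_unit.
- exact: regular_factor.
split; last exact: idemC.
- exact/commr_sym/idemC.
apply/commrD; first exact/commrX/commr_refl.
by apply/commrB; [apply: commr1 | apply/commr_sym/idemC].
Qed.

Lemma pi_regular_of_strongly_pi_star_regular (R : pzRingType) (s : R -> R) :
  strongly_pi_star_regular s -> pi_regular R.
Proof.
move=> spsr a; have [e [u [m [[ee _] [v [uv _]] m_gt0 am _]]]] := spsr a.
by exists m, v; split=> //; rewrite am -(mulrA e u v) uv mulr1 mulrA ee.
Qed.

Lemma strongly_star_clean_of_pi_star_regular (R : pzRingType) (s : R -> R) :
  is_star_involution s -> strongly_pi_star_regular s -> strongly_star_clean s.
Proof.
move=> star_s spsr a.
have [e [u [[|k] [proj_e [v [uv vu]] // _ am [ae au eu]]]]] := spsr a.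
have [ee _] := proj_e; have av : GRing.comm a v := comm_inv uv vu au.
have ev : GRing.comm e v := comm_inv uv vu eu.
pose g := 1 - e; have gg : g * g = g := idem_subr ee.
have ga : GRing.comm g a by apply/commr_sym/commrB; [apply: commr1 | apply: ae].
pose n := g * a.
have nk : n ^+ k.+1 = 0.
  by rewrite exprMn_comm // idem_expS // am mulrA subr_mul_idem // mul0r.
have [w [nw wn]] := nilpotent_unit_subr nk.
have gn : GRing.comm g n by apply: commrM.
have gw : GRing.comm g w by apply: comm_inv nw wn (commrB (commr1 g) gn).
have aE : a - g = e * a + g * (n - 1).
  by rewrite mulrBr mulr1 mulrA gg addrA -mulrDl subrKC mul1r.
exists g, (a - g); split; last exact/commrB/commr_refl.
- exact: projection_subr.
- have ex : GRing.comm e (v * a ^+ k) by apply/commrM/commrX.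
  have ax : a * (v * a ^+ k) = e.
    by rewrite mulrA av -mulrA -exprS am mulrA -ev -mulrA vu mulr1.
  have xa : v * a ^+ k * a = e.
    by rewrite -mulrA -exprSr am mulrA -ev -mulrA vu mulr1.
  have g_n1 : GRing.comm g (n - 1) by apply/commrB/commr1.
  have nw' : (n - 1) * - w = 1 by rewrite -opprB mulrNN nw.
  have wn' : - w * (n - 1) = 1 by rewrite -opprB mulrNN wn.
  rewrite aE.
  apply: (unit_add_corner (p' := e * (v * a ^+ k)) (q' := g * - w) ee).
  + exact: corner_mul.
  + exact: corner_mul.
  + exact: corner_mul.
  + by apply: corner_mul; last exact: commrN.
  + by apply: corner_unit_mul; rewrite // ax ee.
  + by apply: corner_unit_mul; rewrite // xa ee.
  + by apply: corner_unit_mul; rewrite ?nw' ?mul1r //; apply: commrN.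
  + by apply: corner_unit_mul; rewrite ?wn' ?mul1r //; apply: commrN.
- by rewrite subrKC.
Qed.

Theorem corollary3p8 (R : pzRingType) (s : R -> R) :
  is_star_involution s ->
  (strongly_star_clean s /\ pi_regular R <-> strongly_pi_star_regular s).
Proof.
move=> star_s; split.
  by move=> [clean_s pireg]; apply: strongly_pi_star_regular_of_clean.
move=> spsr; split; first exact: strongly_star_clean_of_pi_star_regular.
exact: pi_regular_of_strongly_pi_star_regular spsr.
Qed.
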